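(* Let $K \ge 2$ and $n \ge 1$. For any pair of label assignments $\tilde\sigma, \sigma \in \{1,\ldots,K\}^n$, define the Hamming loss $H(\tilde\sigma,\sigma) = \sum_{i=1}^n I(\tilde\sigma_i \ne \sigma_i)$ and Binder's loss \[ B(\tilde\sigma,\sigma) = \sum_{1 \le i<j \le n} \Big[ I(\tilde\sigma_i \ne \tilde\sigma_j)\, I(\sigma_i = \sigma_j) + I(\tilde\sigma_i = \tilde\sigma_j)\, I(\sigma_i \ne \sigma_j) \Big]. \] Then \[ B(\tilde\sigma,\sigma) \le H(\tilde\sigma,\sigma)\Big( n - \tfrac{1}{2} H(\tilde\sigma,\sigma) \Big). \] Moreover, if $K = 2$, then $B(\tilde\sigma,\sigma) = H(\tilde\sigma,\sigma)\big(n - H(\tilde\sigma,\sigma)\big)$.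
   Context: $I(\cdot)$ denotes the indicator function. *)

From mathcomp Require Import all_boot all_order all_algebra.
Set Implicit Arguments. Unset Strict Implicit. Unset Printing Implicit Defensive.

(* Label assignments in {1..K}^n are finite functions 'I_n -> 'I_K
   (labels 0..K-1, a relabelling of 1..K). *)

Definition hamming (n K : nat) (st s : {ffun 'I_n -> 'I_K}) : nat :=
  \sum_(i < n) (st i != s i).

Definition binder (n K : nat) (st s : {ffun 'I_n -> 'I_K}) : nat :=
  \sum_(i < n) \sum_(j < n | i < j)
     ((st i != st j) * (s i == s j) + (st i == st j) * (s i != s j)).

(* With d i the indicator of st i <> s i, the pair (i, j) contributes to
   Binder's loss only if d i or d j is 1, so its term is at most
   d i + d j - d i d j; for K = 2 it is exactly d i + d j - 2 d i d j, since
   relabelling both points of a pair within two labels preserves whether they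
   agree.  Summing over i < j, with sum (d i + d j) = (n - 1) H and
   sum d i d j = H (H - 1) / 2, gives both statements. *)

From mathcomp Require Import all_boot all_order all_algebra.
From mathcomp Require Import ring lra.
Import Order.TTheory GRing.Theory Num.Theory.
Local Open Scope ring_scope.

Definition binder_pair {T : eqType} (a b c e : T) : nat :=
  ((a != b) * (c == e) + (a == b) * (c != e))%N.

Lemma binder_pair_le1 (T : eqType) (a b c e : T) : (binder_pair a b c e <= 1)%N.
Proof. by rewrite /binder_pair; case: (a == b); case: (c == e). Qed.

Lemma binder_pair_le (R : numDomainType) (T : eqType) (a b c e : T) :
  (binder_pair a b c e)%:R <= (a != c)%:R + (b != e)%:R - (a != c)%:R * (b != e)%:R :> R.
Proof.
have [->|ac] := eqVneq a c; have [->|be] := eqVneq b e;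
  rewrite ?eqxx ?ac ?be /= ?mul0r ?mulr0 ?mul1r ?subr0 ?addr0 ?add0r ?addrK //.
- by rewrite /binder_pair; case: (c == e).
all: by rewrite lern1 binder_pair_le1.
Qed.

Lemma binder_pair_two_nat (a b c e : 'I_2) :
  (binder_pair a b c e + (a != c) * (b != e) * 2 = (a != c) + (b != e))%N.
Proof. by move: a b c e; do 4! case=> [[|[|?]] ?]. Qed.

Lemma binder_pair_two (R : pzRingType) (a b c e : 'I_2) :
  (binder_pair a b c e)%:R = (a != c)%:R + (b != e)%:R - 2 * ((a != c)%:R * (b != e)%:R) :> R.
Proof.
apply: (addIr (2 * ((a != c)%:R * (b != e)%:R))).
by rewrite subrK mulr_natl -natrM -mulrnA -!natrD binder_pair_two_nat.
Qed.

Lemma sum_lt_pairs_sym (R : nmodType) n (g : 'I_n -> 'I_n -> R) :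
  (forall i j, g i j = g j i) ->
  (\sum_(i < n) \sum_(j < n | (i < j)%N) g i j) *+ 2 + \sum_(i < n) g i i
  = \sum_(i < n) \sum_(j < n) g i j.
Proof.
move=> g_sym.
have split_row i : \sum_(j < n) g i j
    = \sum_(j < n | (i < j)%N) g i j + \sum_(j < n | (j < i)%N) g i j + g i i.
  rewrite (bigD1 i) //= addrC (bigID (fun j : 'I_n => (i < j)%N)) /=.
  congr (_ + _ + _); apply: eq_bigl => j.
    by rewrite andb_idl // => ij; rewrite -val_eqE /= gtn_eqF.
  by rewrite -leqNgt ltn_neqAle -val_eqE /=.
rewrite (eq_bigr _ (fun i _ => split_row i)) !big_split /= mulr2n.
congr (_ + _ + _); rewrite (exchange_big_dep predT) //=.
by apply: eq_bigr => i _; apply: eq_bigr => j _; rewrite g_sym.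
Qed.

Lemma sum_lt_pairs_indicator (R : comPzRingType) n (b : 'I_n -> bool) (c : R) :
  (\sum_(i < n) \sum_(j < n | (i < j)%N)
     ((b i)%:R + (b j)%:R - c * ((b i)%:R * (b j)%:R))) *+ 2
  = (\sum_(i < n) b i)%:R * (n%:R *+ 2 - 2 + c) - c * (\sum_(i < n) b i)%:R ^+ 2.
Proof.
rewrite natr_sum; set h := \sum_(i < n) (b i)%:R.
set g := fun i j : 'I_n => (b i)%:R + (b j)%:R - c * ((b i)%:R * (b j)%:R) : R.
have g_sym i j : g i j = g j i by rewrite /g; ring.
have row i : \sum_(j < n) g i j = (b i)%:R *+ n + h - c * (b i)%:R * h.
  by rewrite sumrB big_split /= sumr_const card_ord -!mulr_sumr mulrA.
have diag i : g i i = (2 - c) * (b i)%:R.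
  by rewrite /g; case: (b i) => /=; ring.
have := @sum_lt_pairs_sym _ _ g g_sym.
rewrite (eq_bigr _ (fun i _ => row i)) (eq_bigr _ (fun i _ => diag i)).
rewrite sumrB big_split /= sumrMnl sumr_const card_ord -!mulr_suml -!mulr_sumr -/h.
by move/(canRL (addrK _)) => ->; ring.
Qed.

Lemma binder_le_pairs (R : numDomainType) n K (st s : {ffun 'I_n -> 'I_K}) :
  (binder st s)%:R <= \sum_(i < n) \sum_(j < n | (i < j)%N)
    ((st i != s i)%:R + (st j != s j)%:R - 1 * ((st i != s i)%:R * (st j != s j)%:R)) :> R.
Proof.
rewrite natr_sum; apply: ler_sum => i _; rewrite natr_sum; apply: ler_sum => j _.
by rewrite mul1r; apply: binder_pair_le.
Qed.

Lemma binder_two_pairs (R : pzRingType) n (st s : {ffun 'I_n -> 'I_2}) :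
  (binder st s)%:R = \sum_(i < n) \sum_(j < n | (i < j)%N)
    ((st i != s i)%:R + (st j != s j)%:R - 2 * ((st i != s i)%:R * (st j != s j)%:R)) :> R.
Proof.
rewrite natr_sum; apply: eq_bigr => i _; rewrite natr_sum; apply: eq_bigr => j _.
exact: binder_pair_two.
Qed.

Theorem theorem3 (K n : nat) (hK : (2 <= K)%N) (hn : (1 <= n)%N) :
  (forall st s : {ffun 'I_n -> 'I_K},
     ((binder st s)%:R : rat) <= (hamming st s)%:R * (n%:R - (hamming st s)%:R / 2))
  /\ (K = 2%N -> forall st s : {ffun 'I_n -> 'I_K},
     ((binder st s)%:R : rat) = (hamming st s)%:R * (n%:R - (hamming st s)%:R)).
Proof.
split=> [st s | -> st s].
  have := @sum_lt_pairs_indicator rat n (fun i => st i != s i) 1.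
  have := @binder_le_pairs rat n K st s; have := ler0n rat (hamming st s).
  rewrite /hamming; move: (\sum_(i < n) _)%N => h.
  move: (binder st s)%:R (\sum_(i < n) _) => B P; nra.
have := @sum_lt_pairs_indicator rat n (fun i => st i != s i) 2.
rewrite -binder_two_pairs /hamming; move: (\sum_(i < n) _)%N => h; lra.
Qed.
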